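(* Let $X$ be a thin combinatorial $2$-complex, let $\mathcal H\le\mathrm{Aut}(X)$, let $Y\subset X$ be an $\mathcal H$-cocompact subcomplex, and let $R$ be a $2$-cell of $X$ that is a missing $3$-shell of $Y$; let $Y'=Y\cup\bigcup_{h\in\mathcal H}hR$. Let $e$ be a $1$-cell of $X$ on $\partial R$, let $e_1,\dots,e_{m_e}$ be all the $1$-cells of the boundary cycle of $R$ that map to $\mathcal H$-translates of $e$, and let $\mathrm{Added}(e)=\mathrm{Sides}_X(Y',e)\setminus\mathrm{Sides}_X(Y,e)$. Then $$|\mathrm{Added}(e)|\ \ge\ \frac{m_e}{|\mathrm{Aut}_{\mathcal H}(R)|}.$$
   Context: $\mathrm{Aut}(X)$ is the group of cellular automorphisms. A side at a $1$-cell $x$ is a pair $(R,r)$ with $R$ a $2$-cell and $r$ a $1$-cell of the boundary cycle $\partial R$ mapping to $x$; $X$ is thin if each $1$-cell has finitely many sides. For a subcomplex $Z$, $\mathrm{Sides}_X(Z,x)$ is the set of sides at $x$ that lift to $Z$, i.e. $x\subset Z$ and $(R,r)\to(X,x)$ factors through $Z$. $Y$ is $\mathcal H$-cocompact if $\mathcal H$-invariant with finitely many $\mathcal H$-orbits of cells. A piece is a nontrivial path factoring through boundary cycles of two $2$-cells in essentially distinct ways (no compatible homeomorphism of the boundary cycles). A missing $3$-shell of $Y$ is a $2$-cell $R$ of $X$ not contained in $Y$ with $\partial R=QS$, $Q$ a path in $Y$, $S$ a concatenation of at most $3$ pieces. $\mathrm{Aut}_{\mathcal H}(R)=\mathrm{Stab}_{\mathcal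 H}(R)/\mathrm{Fix}_{\mathcal H}(R)$, where $\mathrm{Fix}_{\mathcal H}(R)$ is the pointwise stabilizer of $R$ in $\mathcal H$. *)

From mathcomp Require Import all_boot.
Require Stdlib.Lists.List.

Set Implicit Arguments.
Unset Strict Implicit.
Unset Printing Implicit Defensive.

(* 1-cells are oriented (src, tgt) only for bookkeeping; an oriented step   *)
(* is a pair (e, b) with b = true meaning e is traversed from src to tgt.   *)
(* Each 2-cell R has a boundary cycle of length len R >= 1, whose i-th      *)
(* 1-cell (i < len R) is the oriented step (bde R i, bdo R i).              *)

Record complex := Complex {
  V : Type; E : Type; F : Type;
  src : E -> V; tgt : E -> V;
  len : F -> nat;
  bde : F -> nat -> E;
  bdo : F -> nat -> bool;
  len_pos : forall R, 0 < len R;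
  bd_cycle : forall R i, i < len R ->
    (if bdo R i then tgt (bde R i) else src (bde R i)) =
    (let j := (i.+1 %% len R) in if bdo R j then src (bde R j) else tgt (bde R j))
}.

Arguments src {_} _. Arguments tgt {_} _. Arguments len {_} _.
Arguments bde {_} _ _. Arguments bdo {_} _ _.

Section Cx.
Variable X : complex.

Definition ostep := (E X * bool)%type.
Definition osrc (s : ostep) : V X := if s.2 then src s.1 else tgt s.1.
Definition otgt (s : ostep) : V X := if s.2 then tgt s.1 else src s.1.
Definition orev (s : ostep) : ostep := (s.1, ~~ s.2).
Definition bstep (R : F X) (i : nat) : ostep := (bde R i, bdo R i).

Definition dih (n s : nat) (r : bool) (i : nat) : nat :=
  if r then (s + (n - 1 - i)) %% n else (s + i) %% n.

(* Cellular automorphisms.  An automorphism maps vertices, 1-cells (possibly *)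
(* reversing them: afl) and 2-cells bijectively, and restricts on each      *)
(* closed 2-cell R to a cellular homeomorphism of boundary cycles given by  *)
(* the dihedral map dih (len R) (ash R) (arf R).                            *)
Record aut := Aut {
  aV : V X -> V X;
  aE : E X -> E X;
  afl : E X -> bool;
  aF : F X -> F X;
  ash : F X -> nat;
  arf : F X -> bool;
  aV_bij : bijective aV;
  aE_bij : bijective aE;
  aF_bij : bijective aF;
  aE_src : forall e, src (aE e) = aV (if afl e then tgt e else src e);
  aE_tgt : forall e, tgt (aE e) = aV (if afl e then src e else tgt e);
  aF_len : forall R, len (aF R) = len R;
  aF_bde : forall R i, i < len R ->
     bde (aF R) (dih (len R) (ash R) (arf R) i) = aE (bde R i);
  aF_bdo : forall R i, i < len R ->
     bdo (aF R) (dih (len R) (ash R) (arf R) i)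
       = bdo R i (+) afl (bde R i) (+) arf R
}.

Definition posmap (g : aut) (R : F X) (i : nat) : nat :=
  dih (len R) (ash g R) (arf g R) i.

(* h acts as the composite a o b (b first). *)
Definition comp_as (h a b : aut) : Prop :=
  (forall v, aV h v = aV a (aV b v)) /\
  (forall e, aE h e = aE a (aE b e)) /\
  (forall e, afl h e = afl b e (+) afl a (aE b e)) /\
  (forall R, aF h R = aF a (aF b R)) /\
  (forall R i, i < len R -> posmap h R i = posmap a (aF b R) (posmap b R i)).

Definition is_id (h : aut) : Prop :=
  (forall v, aV h v = v) /\ (forall e, aE h e = e) /\ (forall e, afl h e = false) /\
  (forall R, aF h R = R) /\ (forall R i, i < len R -> posmap h R i = i).

Definition is_subgroup (H : aut -> Prop) : Prop :=
  (exists h, H h /\ is_id h) /\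
  (forall a b, H a -> H b -> exists h, H h /\ comp_as h a b) /\
  (forall a, H a -> exists h, H h /\ forall c, comp_as c h a -> is_id c).

Definition thin : Prop :=
  forall x : E X, exists l : seq (F X * nat),
    forall R i, i < len R -> bde R i = x -> List.In (R, i) l.

Record subcx := Subcx {
  sV : V X -> Prop; sE : E X -> Prop; sF : F X -> Prop;
  sE_src : forall e, sE e -> sV (src e);
  sE_tgt : forall e, sE e -> sV (tgt e);
  sF_bd : forall R i, sF R -> i < len R -> sE (bde R i)
}.

Definition invariant (H : aut -> Prop) (Y : subcx) : Prop :=
  forall h, H h ->
    (forall v, sV Y v -> sV Y (aV h v)) /\
    (forall e, sE Y e -> sE Y (aE h e)) /\
    (forall R, sF Y R -> sF Y (aF h R)).

Definition cocompact (H : aut -> Prop) (Y : subcx) : Prop :=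
  invariant H Y /\
  exists (lv : seq (V X)) (le : seq (E X)) (lf : seq (F X)),
    (forall v, sV Y v -> exists v0, List.In v0 lv /\ exists h, H h /\ aV h v0 = v) /\
    (forall e, sE Y e -> exists e0, List.In e0 le /\ exists h, H h /\ aE h e0 = e) /\
    (forall R, sF Y R -> exists R0, List.In R0 lf /\ exists h, H h /\ aF h R0 = R).

Definition is_path (P : seq ostep) : Prop :=
  forall t a b, List.nth_error P t = Some a -> List.nth_error P t.+1 = Some b ->
    otgt a = osrc b.

(* Position of the t-th step of a lift of a path into the boundary cycle of *)
(* R starting at position j: forward (d = false) reads positions j, j+1, ..; *)
(* backward (d = true) reads positions j, j-1, ... traversing them reversed. *)
Definition lpos (R : F X) (j : nat) (d : bool) (t : nat) : nat :=
  if d then (j + len R * t.+1 - t) %% len R else (j + t) %% len R.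

Definition lstep (R : F X) (j : nat) (d : bool) (t : nat) : ostep :=
  if d then orev (bstep R (lpos R j d t)) else bstep R (lpos R j d t).

(* P factors through the boundary cycle of R via the lift (j, d). *)
Definition lift (P : seq ostep) (R : F X) (j : nat) (d : bool) : Prop :=
  j < len R /\ forall t, t < size P -> List.nth_error P t = Some (lstep R j d t).

(* Two lifts are essentially the same if some (dihedral) homeomorphism of   *)
(* boundary cycles dR1 -> dR2 commutes with the maps to X and carries the   *)
(* first lift of P to the second.                                           *)
Definition same_lift (P : seq ostep) (R1 : F X) (j1 : nat) (d1 : bool)
    (R2 : F X) (j2 : nat) (d2 : bool) : Prop :=
  exists (s : nat) (r : bool),
    len R2 = len R1 /\
    (forall i, i < len R1 ->
       bstep R2 (dih (len R1) s r i) = (if r then orev (bstep R1 i) else bstep R1 i)) /\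
    (forall t, t < size P -> dih (len R1) s r (lpos R1 j1 d1 t) = lpos R2 j2 d2 t) /\
    d2 = d1 (+) r.

Definition piece (P : seq ostep) : Prop :=
  0 < size P /\ is_path P /\
  exists R1 j1 d1 R2 j2 d2,
    lift P R1 j1 d1 /\ lift P R2 j2 d2 /\ ~ same_lift P R1 j1 d1 R2 j2 d2.

Definition bseg (R : F X) (j a l : nat) : seq ostep :=
  map (fun t => bstep R ((j + a + t) %% len R)) (iota 0 l).

(* R is a missing 3-shell of Y: R is not in Y and, reading dR from some     *)
(* position j, dR = Q S with Q (length q) a path in Y and S a concatenation *)
(* of at most 3 pieces (of lengths ls).                                      *)
Definition missing_3shell (Y : subcx) (R : F X) : Prop :=
  ~ sF Y R /\
  exists (j q : nat) (ls : seq nat),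
    j < len R /\ size ls <= 3 /\ q + sumn ls = len R /\
    sV Y (osrc (bstep R j)) /\
    (forall t, t < q -> sE Y (bde R ((j + t) %% len R))) /\
    (forall k, k < size ls -> piece (bseg R j (q + sumn (take k ls)) (nth 0 ls k))).

Definition Yp_F (H : aut -> Prop) (Y : subcx) (R : F X) (f : F X) : Prop :=
  sF Y f \/ exists h, H h /\ f = aF h R.
Definition Yp_E (H : aut -> Prop) (Y : subcx) (R : F X) (x : E X) : Prop :=
  sE Y x \/ exists h i, H h /\ i < len R /\ x = aE h (bde R i).

(* Sides_X(Z, x) for Z given by its 1-cell and 2-cell predicates. *)
Definition side_in (ZE : E X -> Prop) (ZF : F X -> Prop) (x : E X)
    (s : F X * nat) : Prop :=
  s.2 < len s.1 /\ bde s.1 s.2 = x /\ ZE x /\ ZF s.1.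

Definition added (H : aut -> Prop) (Y : subcx) (R : F X) (x : E X)
    (s : F X * nat) : Prop :=
  side_in (Yp_E H Y R) (Yp_F H Y R) x s /\ ~ side_in (sE Y) (sF Y) x s.

Definition stab (g : aut) (R : F X) : Prop := aF g R = R.
Definition fixes (g : aut) (R : F X) : Prop :=
  aF g R = R /\ forall i, i < len R -> posmap g R i = i.

Definition fix_coset (H : aut -> Prop) (R : F X) (g g' : aut) : Prop :=
  exists k, H k /\ fixes k R /\ comp_as g' g k.

(* |Stab_H(R) / Fix_H(R)| = N : a complete irredundant list of coset        *)
(* representatives has length N.                                            *)
Definition autH_card (H : aut -> Prop) (R : F X) (N : nat) : Prop :=
  exists gs : seq aut,
    size gs = N /\
    (forall g, List.In g gs -> H g /\ stab g R) /\
    (forall a b i1 i2, List.nth_error gs i1 = Some a -> List.nth_error gs i2 = Some b ->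
        i1 <> i2 -> ~ fix_coset H R a b) /\
    (forall g, H g -> stab g R -> exists a, List.In a gs /\ fix_coset H R a g).

End Cx.

(* l enumerates P without repetition (so |P| = size l). *)
Definition enumerates {A : Type} (P : A -> Prop) (l : seq A) : Prop :=
  List.NoDup l /\ forall x, List.In x l <-> P x.

(* For every position i of the boundary cycle of R carrying a translate h e of e, the 2-cell
   h^-1 R contains e at position h^-1 i, and this side of e is added: h^-1 R lies in Y' but
   not in Y, since otherwise R = h (h^-1 R) would lie in the H-invariant Y.  If two positions
   x, y give the same side, then h_y h_x^-1 stabilizes R and moves x to y; the action of a
   stabilizing element on positions depends only on its Fix_H(R)-coset, so each added side
   comes from at most |Aut_H(R)| positions. *)
From Pilot Require Import Defs.
From mathcomp Require Import all_boot zify.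
From Stdlib Require Import ClassicalEpsilon.
Require Stdlib.Lists.List.

Set Implicit Arguments.
Unset Strict Implicit.

Definition classic_bool {A : Type} (P : A -> Prop) (x : A) : bool :=
  if excluded_middle_informative (P x) then true else false.

Lemma classic_boolP {A : Type} (P : A -> Prop) (x : A) : classic_bool P x = true <-> P x.
Proof. by rewrite /classic_bool; case: excluded_middle_informative. Qed.

Lemma enumerates_of_cover {A : Type} (P : A -> Prop) (l : seq A) :
  (forall x, P x -> List.In x l) -> exists sl, enumerates P sl.
Proof.
move=> cover; pose dec (x y : A) := excluded_middle_informative (x = y).
exists (List.nodup dec (List.filter (classic_bool P) l)).
split; first exact: List.NoDup_nodup.
move=> x; rewrite List.nodup_In List.filter_In classic_boolP.
by split=> [[] | Px] //; split; first exact: cover.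
Qed.

Lemma size_filter_predC {A : Type} (p : A -> bool) (s : seq A) :
  size (List.filter p s) + size (List.filter (fun x => ~~ p x) s) = size s.
Proof. by elim: s => //= a s IH; case: (p a) => /=; lia. Qed.

Lemma NoDup_size_le_fibres {A B : Type} (f : A -> B) (N : nat) (sl : seq B) (ms : seq A) :
  List.NoDup ms -> (forall x, List.In x ms -> List.In (f x) sl) ->
  (forall x, List.In x ms -> exists L : seq A, size L <= N /\
     forall y, List.In y ms -> f y = f x -> List.In y L) ->
  size ms <= size sl * N.
Proof.
elim: sl ms => [|b sl IH] ms uniq_ms f_ms fibres.
  by case: ms uniq_ms f_ms {fibres} => [|x ms] // _ /(_ x (or_introl erefl)).
pose p := classic_bool (fun y => f y = b).
have fibre_b : size (List.filter p ms) <= N.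
  case E: (List.filter p ms) => [|x l] //.
  have /List.filter_In [xms /classic_boolP fxb] : List.In x (List.filter p ms)
    by rewrite E; left.
  have [L [sizeL inL]] := fibres x xms.
  apply: leq_trans sizeL; apply/leP; rewrite -E.
  apply: List.NoDup_incl_length; first exact: List.NoDup_filter.
  by move=> y /List.filter_In [yms /classic_boolP fyb]; apply: inL; rewrite // fyb.
have rest : size (List.filter (fun x => ~~ p x) ms) <= size sl * N.
  apply: IH; first exact: List.NoDup_filter.
    move=> x /List.filter_In [xms /negP not_px]; case: (f_ms x xms) => // bfx.
    by case: not_px; apply/classic_boolP.
  move=> x /List.filter_In [xms _]; have [L [sizeL inL]] := fibres x xms.
  by exists L; split=> // y /List.filter_In [yms _]; apply: inL.
by rewrite -(size_filter_predC p ms) /= mulSn; lia.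
Qed.

Lemma dih_inj (n s : nat) (r : bool) (i j : nat) :
  i < n -> j < n -> dih n s r i = dih n s r j -> i = j.
Proof.
rewrite /dih => lt_in lt_jn; case: r => /eqP; rewrite eqn_modDl.
  by rewrite !modn_small; [move/eqP; lia | lia | lia].
by rewrite !modn_small // => /eqP.
Qed.

Lemma ltn_dih (n s : nat) (r : bool) (i : nat) : 0 < n -> dih n s r i < n.
Proof. by rewrite /dih => n_gt0; case: r; apply: ltn_pmod. Qed.

Section Automorphisms.
Variable X : complex.
Implicit Types (g h k : aut X) (Z : F X).

Lemma ltn_posmap g Z i : posmap g Z i < len (aF g Z).
Proof. by rewrite aF_len; apply/ltn_dih/len_pos. Qed.

Lemma posmap_inj g Z i j :
  i < len Z -> j < len Z -> posmap g Z i = posmap g Z j -> i = j.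
Proof. exact: dih_inj. Qed.

Record left_inv (hinv h : aut X) : Prop := LeftInv {
  linv_aE : forall x, aE hinv (aE h x) = x;
  linv_aF : forall Z, aF hinv (aF h Z) = Z;
  linv_posmap : forall Z i, i < len Z -> posmap hinv (aF h Z) (posmap h Z i) = i
}.

Section LeftInverse.
Variables hinv h : aut X.
Hypothesis hinvK : left_inv hinv h.

Lemma linv_aFV Z : aF h (aF hinv Z) = Z.
Proof. by apply: (bij_inj (aF_bij hinv)); rewrite linv_aF. Qed.

Lemma linv_posmapV Z i : i < len Z -> posmap h (aF hinv Z) (posmap hinv Z i) = i.
Proof.
move=> lt_iZ; have lt_k := ltn_posmap h (aF hinv Z) (posmap hinv Z i).
have := linv_posmap hinvK (ltn_posmap hinv Z i); rewrite linv_aFV in lt_k *.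
by apply: posmap_inj.
Qed.

End LeftInverse.

Variable H : aut X -> Prop.
Hypothesis Hsub : is_subgroup H.

Lemma subgroup_left_inv h : H h -> exists hinv, H hinv /\ left_inv hinv h.
Proof.
case: Hsub => _ [Hmul Hinv] Hh; have [hinv [Hhinv hinvP]] := Hinv h Hh.
exists hinv; split=> //; have [c [_ c_comp]] := Hmul _ _ Hhinv Hh.
have [cV [cE [_ [cF cpos]]]] := hinvP c c_comp.
have [_ [compE [_ [compF comppos]]]] := c_comp.
by split=> [x | Z | Z i lt_iZ]; rewrite -?compE -?compF -?comppos ?cE ?cF ?cpos.
Qed.

Lemma stab_of_same_side h hinv k Z x y :
  H h -> H k -> left_inv hinv h -> x < len Z -> y < len Z ->
  (aF k Z, posmap k Z x) = (aF hinv Z, posmap hinv Z y) ->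
  exists g, H g /\ stab g Z /\ posmap g Z x = y.
Proof.
case: Hsub => _ [Hmul _] Hh Hk hinvK lt_xZ lt_yZ [kZ kx].
have [g [Hg [_ [_ [_ [gF gpos]]]]]] := Hmul _ _ Hh Hk.
exists g; split=> //; split; first by rewrite /stab gF kZ linv_aFV.
by rewrite gpos // kZ kx linv_posmapV.
Qed.

Lemma stab_orbit_size Z N i :
  autH_card H Z N -> i < len Z ->
  exists L : seq nat, size L <= N /\
    forall g, H g -> stab g Z -> List.In (posmap g Z i) L.
Proof.
case=> gs [size_gs [_ [_ reps]]] lt_iZ.
exists (map (fun a => posmap a Z i) gs); split; first by rewrite size_map size_gs.
move=> g Hg stab_g; have [a [gs_a [k [_ [[kZ kpos] [_ [_ [_ [_ gpos]]]]]]]]] := reps g Hg stab_g.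
rewrite gpos // kZ kpos //.
by elim: gs gs_a {size_gs reps} => //= b gs IH [<- | /IH]; [left | right].
Qed.

Lemma translate_side_added (Y : subcx X) (R : F X) (e : E X) h hinv i :
  Defs.invariant H Y -> ~ sF Y R -> H h -> H hinv -> left_inv hinv h ->
  i < len R -> bde R i = aE h e ->
  added H Y R e (aF hinv R, posmap hinv R i).
Proof.
move=> Yinv R_notin_Y Hh Hhinv hinvK lt_iR bde_i.
have e_at : bde (aF hinv R) (posmap hinv R i) = e.
  by rewrite /posmap aF_bde // bde_i linv_aE.
split; last first.
  case=> _ [_ [_ /= YhinvR]]; apply: R_notin_Y.
  by have [_ [_ YF]] := Yinv h Hh; rewrite -(linv_aFV hinvK R); apply: YF.
split; first exact: ltn_posmap.
split=> //; split; last by right; exists hinv.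
by right; exists hinv, i; rewrite -e_at /posmap aF_bde.
Qed.

End Automorphisms.

Theorem lemma3p15 (X : complex) (H : aut X -> Prop) (Y : subcx X) (R : F X) (e : E X)
  (Xthin : thin X) (Hsub : is_subgroup H) (Ycoc : cocompact H Y)
  (Rshell : missing_3shell Y R)
  (eR : exists i, i < len R /\ bde R i = e)
  (N : nat) (HN : autH_card H R N)
  (ms : seq nat)
  (Hms : enumerates (fun i => i < len R /\ exists h, H h /\ bde R i = aE h e) ms) :
  exists sl : seq (F X * nat),
    enumerates (added H Y R e) sl /\ size ms <= size sl * N.
Proof.
have [[h0 _] _] := Hsub.
have /choice [c cP] : forall i, exists p : aut X * aut X, List.In i ms ->
    [/\ i < len R, H p.1, H p.2, left_inv p.2 p.1 & bde R i = aE p.1 e].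
  move=> i; case: (excluded_middle_informative (List.In i ms)); last first.
    by exists (h0, h0).
  move=> /(proj2 Hms) [lt_iR [h [Hh bde_i]]].
  have [hinv [Hhinv hinvK]] := subgroup_left_inv Hsub Hh.
  by exists (h, hinv).
pose side i := (aF (c i).2 R, posmap (c i).2 R i).
have [sl slP] : exists sl, enumerates (added H Y R e) sl.
  have [l l_sides] := Xthin e.
  by apply: (@enumerates_of_cover _ _ l) => -[f p] [[/= lt_p [bde_p _]] _]; apply: l_sides.
exists sl; split=> //; apply: (NoDup_size_le_fibres (f := side)); first exact: (proj1 Hms).
  move=> i /cP [lt_iR Hh Hhinv hinvK bde_i]; apply/(proj2 slP).
  exact: translate_side_added (proj1 Ycoc) (proj1 Rshell) Hh Hhinv hinvK lt_iR bde_i.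
move=> x /cP [lt_xR _ Hxinv _ _].
have [L [size_L L_orbit]] := stab_orbit_size HN lt_xR.
exists L; split=> // y /cP [lt_yR Hy _ yinvK _] same.
have [g [Hg [stab_g <-]]] := stab_of_same_side Hsub Hy Hxinv yinvK lt_xR lt_yR (esym same).
exact: L_orbit.
Qed.
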